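(* Let $q\in[0,1)$, $a\in\mathbb D$, $b_a(z)=\frac{z-a}{1-z\overline a}$ and $b_{a,q}(z)=b_a(\sqrt{1-q}\,z)$. Then the operator $M_{b_{a,q}}$ of multiplication by $b_{a,q}$ is a contraction from $\mathbf H_{2,q}$ into itself; equivalently, the kernel $(1-b_{a,q}(z)\overline{b_{a,q}(w)})E_q(z\overline w)$ is positive definite on $|z|,|w|<1/\sqrt{1-q}$.
   Context: $[0]_q=1$, $[k]_q=1+q+\cdots+q^{k-1}$ ($k\ge1$), $[k]_q!=\prod_{j=1}^k[j]_q$, $[0]_q!=1$. $E_q(x)=\sum_{k\ge0}x^k/[k]_q!=\prod_{j=0}^\infty(1-(1-q)q^jx)^{-1}$ for $|x|<1/(1-q)$. $\mathbf H_{2,q}$ is the reproducing kernel Hilbert space with kernel $E_q(z\overline w)$, consisting of power series $\sum_k a_kz^k$ with $\sum_k[k]_q!|a_k|^2<\infty$; its elements are analytic in $|z|<1/\sqrt{1-q}$. *)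

From Stdlib Require Import Reals.
From Coquelicot Require Import Coquelicot.
Open Scope R_scope.

Fixpoint qint (q : R) (k : nat) : R :=
  match k with
  | O => 0
  | S k' => qint q k' + q ^ k'
  end.

Fixpoint qfact (q : R) (k : nat) : R :=
  match k with
  | O => 1
  | S k' => qfact q k' * qint q (S k')
  end.

Definition Eq (q : R) (x : C) : C :=
  (Series (fun k => Re (Cdiv (Cpow x k) (RtoC (qfact q k)))),
   Series (fun k => Im (Cdiv (Cpow x k) (RtoC (qfact q k))))).

Definition blaschke (a z : C) : C :=
  Cdiv (Cminus z a) (Cminus 1 (Cmult z (Cconj a))).

Definition blaschke_q (a : C) (q : R) (z : C) : C :=
  blaschke a (Cmult (RtoC (sqrt (1 - q))) z).

Definition kernel_bq (a : C) (q : R) (z w : C) : C :=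
  Cmult (Cminus 1 (Cmult (blaschke_q a q z) (Cconj (blaschke_q a q w))))
        (Eq q (Cmult z (Cconj w))).

Definition pos_def_kernel (D : C -> Prop) (K : C -> C -> C) : Prop :=
  forall (n : nat) (z c : nat -> C),
    (forall i, (i <= n)%nat -> D (z i)) ->
    let s := sum_n (fun i => sum_n (fun j =>
                 Cmult (Cmult (c i) (Cconj (c j))) (K (z i) (z j))) n) n in
    Im s = 0 /\ 0 <= Re s.

From Stdlib Require Import Reals Lra Lia.
From Coquelicot Require Import Coquelicot.
Open Scope R_scope.

(* With u = sqrt(1-q) z and w_i = c_i / (1 - u_i conj a), the Blaschke identity
   1 - b_a(u) conj b_a(v) = (1 - |a|^2) (1 - u conj v) / ((1 - u conj a) conj (1 - v conj a))
   and (1-q) x * x^k/[k]_q! = (1 - q^(k+1)) x^(k+1)/[k+1]_q! turn the k-th term of the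
   quadratic form of the kernel into (1 - |a|^2) (U_k - (1 - q^(k+1)) U_(k+1)), where
   U_k = |sum_i w_i z_i^k|^2 / [k]_q! >= 0.  Summing over k leaves the real number
   (1 - |a|^2) (U_0 + sum_k q^(k+1) U_(k+1)) >= 0. *)

Lemma qint_S_ge_1 (q : R) (n : nat) : 0 <= q -> 1 <= qint q (S n).
Proof.
  intros Hq; induction n as [|n IH]; [simpl; lra|].
  change (qint q (S (S n))) with (qint q (S n) + q ^ S n).
  pose proof (pow_le q (S n) Hq); lra.
Qed.

Lemma qint_mul_1_minus (q : R) (n : nat) : qint q n * (1 - q) = 1 - q ^ n.
Proof. induction n as [|n IH]; simpl; [ring|]. rewrite Rmult_plus_distr_r, IH; ring. Qed.

Lemma qfact_gt_0 (q : R) (n : nat) : 0 <= q -> 0 < qfact q n.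
Proof.
  intros Hq; induction n as [|n IH]; simpl; [lra|].
  apply Rmult_lt_0_compat; [exact IH|]. pose proof (qint_S_ge_1 q n Hq); simpl in *; lra.
Qed.

(* Ratio test: consecutive terms have ratio [r (1 - q) / (1 - q^(k+1))] --> [r (1 - q)]. *)
Lemma ex_series_pow_div_qfact (q r : R) :
  0 <= q < 1 -> 0 < r -> r * (1 - q) < 1 -> ex_series (fun k => r ^ k / qfact q k).
Proof.
  intros Hq Hr Hrq.
  assert (Hpos : forall k, 0 < r ^ k / qfact q k).
  { intro k. apply Rdiv_lt_0_compat; [apply pow_lt; lra | apply qfact_gt_0; lra]. }
  apply ex_series_ext with (fun k => Rabs (r ^ k / qfact q k)).
  { intro k. apply Rabs_pos_eq, Rlt_le, Hpos. }
  apply ex_series_DAlembert with (r * (1 - q)); [exact Hrq | intro k; apply Rgt_not_eq, Hpos |].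
  apply is_lim_seq_ext with (fun k => r * (1 - q) / (1 - q ^ S k)).
  { intro k. rewrite Rabs_pos_eq by (apply Rlt_le, Rdiv_lt_0_compat; apply Hpos).
    pose proof (qfact_gt_0 q k (proj1 Hq)). pose proof (qint_S_ge_1 q k (proj1 Hq)).
    rewrite <- (qint_mul_1_minus q (S k)). change (qfact q (S k)) with (qfact q k * qint q (S k)).
    change (r ^ S k) with (r * r ^ k). field.
    repeat split; try lra. apply pow_nonzero; lra. }
  replace (Finite (r * (1 - q))) with (Finite (r * (1 - q) / (1 - 0))) by (f_equal; field).
  apply is_lim_seq_div'; [apply is_lim_seq_const | | lra].
  apply is_lim_seq_minus'; [apply is_lim_seq_const |].
  apply (is_lim_seq_incr_1 (fun k => q ^ k)), is_lim_seq_geom. rewrite Rabs_pos_eq; lra.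
Qed.

Lemma sum_n_Re (t : nat -> C) (n : nat) : sum_n (fun k => Re (t k)) n = Re (sum_n t n).
Proof. induction n as [|n IH]; [rewrite !sum_O | rewrite !sum_Sn, IH]; reflexivity. Qed.

Lemma sum_n_Im (t : nat -> C) (n : nat) : sum_n (fun k => Im (t k)) n = Im (sum_n t n).
Proof. induction n as [|n IH]; [rewrite !sum_O | rewrite !sum_Sn, IH]; reflexivity. Qed.

Lemma is_series_Re (t : nat -> C) (L : C) :
  is_series t L -> is_series (fun k => Re (t k)) (Re L).
Proof.
  intro H. apply (filterlim_ext (fun n => Re (sum_n t n))); [intro; symmetry; apply sum_n_Re |].
  apply filterlim_locally; intro eps.
  generalize (proj1 (filterlim_locally _ _) H eps); apply filter_imp.
  intros n [B _]; exact B.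
Qed.

Lemma is_series_Im (t : nat -> C) (L : C) :
  is_series t L -> is_series (fun k => Im (t k)) (Im L).
Proof.
  intro H. apply (filterlim_ext (fun n => Im (sum_n t n))); [intro; symmetry; apply sum_n_Im |].
  apply filterlim_locally; intro eps.
  generalize (proj1 (filterlim_locally _ _) H eps); apply filter_imp.
  intros n [_ B]; exact B.
Qed.

Lemma is_series_RtoC_Im (r : nat -> R) (L : C) : is_series (fun k => RtoC (r k)) L -> Im L = 0.
Proof.
  intro H. rewrite <- (is_series_unique _ _ (is_series_Im _ _ H)).
  rewrite (Series_ext _ (fun _ => 0 * 0)) by (intro; simpl; ring).
  rewrite Series_scal_l; ring.
Qed.

Lemma is_series_sum_n {K : AbsRing} {V : NormedModule K}
  (n : nat) (t : nat -> nat -> V) (L : nat -> V) :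
  (forall i, (i <= n)%nat -> is_series (t i) (L i)) ->
  is_series (fun k => sum_n (fun i => t i k) n) (sum_n L n).
Proof.
  induction n as [|n IH]; intro H.
  - rewrite sum_O. apply (is_series_ext (t 0%nat)); [intro; symmetry; apply sum_O | apply H; lia].
  - rewrite sum_Sn. apply (is_series_ext (fun k => plus (sum_n (fun i => t i k) n) (t (S n) k))).
    { intro; symmetry; apply sum_Sn. }
    apply is_series_plus; [apply IH; intros; apply H|apply H]; lia.
Qed.

Lemma RtoC_neq_0 (r : R) : r <> 0 -> RtoC r <> 0%C.
Proof. intros Hr E; apply Hr; injection E; auto. Qed.

Definition Eq_term (q : R) (x : C) (k : nat) : C := Cdiv (Cpow x k) (RtoC (qfact q k)).

Lemma Cmod_Eq_term (q : R) (x : C) (k : nat) :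
  0 <= q -> Cmod (Eq_term q x k) = Cmod x ^ k / qfact q k.
Proof.
  intro Hq. pose proof (qfact_gt_0 q k Hq).
  unfold Eq_term. rewrite Cmod_div, Cmod_pow, Cmod_R, Rabs_pos_eq by (lra || apply RtoC_neq_0; lra).
  reflexivity.
Qed.

Lemma is_series_Eq (q : R) (x : C) :
  0 <= q < 1 -> Cmod x * (1 - q) < 1 -> is_series (Eq_term q x) (Eq q x).
Proof.
  intros Hq Hx. pose proof (Cmod_ge_0 x).
  set (r := (Cmod x + 1 / (1 - q)) / 2).
  assert (Hr : Cmod x < r /\ r * (1 - q) < 1).
  { assert (Cmod x < 1 / (1 - q)) by (apply Rmult_lt_reg_r with (1 - q); field_simplify; lra).
    unfold r; split; [lra|]. field_simplify; lra. }
  assert (Hex : ex_series (Eq_term q x)).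
  { apply (ex_series_le (V := C_CompleteNormedModule)) with (fun k => r ^ k / qfact q k).
    - intro k. change norm with Cmod. rewrite Cmod_Eq_term by lra.
      apply Rmult_le_compat_r; [apply Rlt_le, Rinv_0_lt_compat, qfact_gt_0; lra |].
      apply pow_incr; lra.
    - apply ex_series_pow_div_qfact; lra. }
  destruct Hex as [L HL].
  replace (Eq q x) with L; [exact HL |].
  unfold Eq.
  change (fun k => Re (Cdiv (Cpow x k) (RtoC (qfact q k)))) with (fun k => Re (Eq_term q x k)).
  change (fun k => Im (Cdiv (Cpow x k) (RtoC (qfact q k)))) with (fun k => Im (Eq_term q x k)).
  rewrite (is_series_unique _ _ (is_series_Re _ _ HL)).
  rewrite (is_series_unique _ _ (is_series_Im _ _ HL)).
  destruct L; reflexivity.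
Qed.

Lemma Cconj_RtoC (r : R) : Cconj (RtoC r) = RtoC r.
Proof. unfold Cconj, RtoC; simpl; f_equal; ring. Qed.

Lemma Cconj_neq_0 (w : C) : w <> 0%C -> Cconj w <> 0%C.
Proof. intros Hw E. apply Hw. rewrite <- (Cconj_conj w), E. apply Cconj_RtoC. Qed.

Lemma sum_n_Cconj (w : nat -> C) (n : nat) : Cconj (sum_n w n) = sum_n (fun i => Cconj (w i)) n.
Proof.
  induction n as [|n IH]; [rewrite !sum_O | rewrite !sum_Sn, <- IH; apply Cplus_conj]; reflexivity.
Qed.

Open Scope C_scope.

Lemma sum_n_gram (w : nat -> C) (n : nat) :
  sum_n (fun i => sum_n (fun j => w i * Cconj (w j)) n) n = RtoC (Cmod (sum_n w n) ^ 2).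
Proof.
  rewrite (Cmod2_conj (sum_n w n)), sum_n_Cconj.
  transitivity (sum_n (fun i => w i * sum_n (fun j => Cconj (w j)) n) n).
  - apply sum_n_ext; intro i. apply (sum_n_mult_l (K := C_Ring)).
  - apply (sum_n_mult_r (K := C_Ring)).
Qed.

Lemma blaschke_kernel (a u v : C) :
  1 - u * Cconj a <> 0 -> 1 - v * Cconj a <> 0 ->
  1 - blaschke a u * Cconj (blaschke a v)
  = RtoC (1 - Cmod a ^ 2) * (1 - u * Cconj v) / ((1 - u * Cconj a) * Cconj (1 - v * Cconj a)).
Proof.
  intros Hu Hv. pose proof (Cconj_neq_0 _ Hv) as Hv'.
  unfold blaschke. rewrite Cdiv_conj by exact Hv.
  rewrite RtoC_minus, Cmod2_conj, !Cminus_conj, !Cmult_conj, Cconj_conj, Cconj_RtoC in *.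
  field. split; assumption.
Qed.

Lemma Eq_term_S (q : R) (x : C) (k : nat) :
  (0 <= q < 1)%R -> RtoC (1 - q) * x * Eq_term q x k = RtoC (1 - q ^ S k) * Eq_term q x (S k).
Proof.
  intro Hq. pose proof (qfact_gt_0 q k (proj1 Hq)). pose proof (qint_S_ge_1 q k (proj1 Hq)).
  unfold Eq_term. rewrite Cpow_S. change (qfact q (S k)) with (qfact q k * qint q (S k))%R.
  rewrite <- (qint_mul_1_minus q (S k)), !RtoC_mult, RtoC_minus.
  field. split; apply RtoC_neq_0; lra.
Qed.

Lemma sum_n_Cmult_minus (al be : C) (f g : nat -> C) (n : nat) :
  sum_n (fun i => al * (f i - be * g i)) n = al * (sum_n f n - be * sum_n g n).
Proof.
  induction n as [|n IH]; [rewrite !sum_O; reflexivity |].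
  rewrite !sum_Sn, IH. change plus with Cplus.
  match goal with |- ?l = ?r => change (@eq C l r) end. ring.
Qed.

Lemma Cminus_1_mul_Cconj_neq_0 (u a : C) : (Cmod u < 1)%R -> (Cmod a < 1)%R -> 1 - u * Cconj a <> 0.
Proof.
  intros Hu Ha E.
  assert (Hua : u * Cconj a = 1) by (symmetry; apply Ceq_minus, E).
  assert (Hlt : (Cmod (u * Cconj a) < 1)%R).
  { rewrite Cmod_mult, Cmod_conj. pose proof (Cmod_ge_0 u). pose proof (Cmod_ge_0 a). nra. }
  rewrite Hua, Cmod_1 in Hlt. lra.
Qed.

Section Kernel_expansion.

Variables (q : R) (a : C) (n : nat) (z c : nat -> C).
Hypothesis Hq : (0 <= q < 1)%R.
Hypothesis Ha : (Cmod a < 1)%R.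
Hypothesis Hz : forall i, (i <= n)%nat -> (Cmod (z i) < 1 / sqrt (1 - q))%R.

Lemma Cmod_scaled_point_lt_1 (i : nat) : (i <= n)%nat -> (Cmod (sqrt (1 - q) * z i) < 1)%R.
Proof.
  intro Hi. pose proof (Hz i Hi). assert (Hs : (0 < sqrt (1 - q))%R) by (apply sqrt_lt_R0; lra).
  rewrite Cmod_mult, Cmod_R, Rabs_pos_eq by lra.
  apply Rmult_lt_reg_r with (/ sqrt (1 - q))%R; [apply Rinv_0_lt_compat, Hs|].
  field_simplify; lra.
Qed.

Lemma Cmod_point_product_lt (i j : nat) :
  (i <= n)%nat -> (j <= n)%nat -> (Cmod (z i * Cconj (z j)) * (1 - q) < 1)%R.
Proof.
  intros Hi Hj.
  pose proof (Cmod_scaled_point_lt_1 i Hi) as Hzi. pose proof (Cmod_scaled_point_lt_1 j Hj) as Hzj.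
  rewrite Cmod_mult, Cmod_R, Rabs_pos_eq in Hzi, Hzj by (apply sqrt_pos).
  rewrite Cmod_mult, Cmod_conj, <- (sqrt_sqrt (1 - q)) by lra.
  replace (Cmod (z i) * Cmod (z j) * (sqrt (1 - q) * sqrt (1 - q)))%R
    with ((sqrt (1 - q) * Cmod (z i)) * (sqrt (1 - q) * Cmod (z j)))%R by ring.
  assert (0 <= sqrt (1 - q) * Cmod (z i))%R
    by (apply Rmult_le_pos; [apply sqrt_pos | apply Cmod_ge_0]).
  nra.
Qed.

Lemma blaschke_q_denominator_neq_0 (i : nat) :
  (i <= n)%nat -> 1 - sqrt (1 - q) * z i * Cconj a <> 0.
Proof. intro Hi. apply Cminus_1_mul_Cconj_neq_0; [apply Cmod_scaled_point_lt_1 |]; assumption. Qed.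

Definition blaschke_q_weight (i : nat) : C := c i / (1 - sqrt (1 - q) * z i * Cconj a).

Definition gram_term (k : nat) : R :=
  (Cmod (sum_n (fun i => (blaschke_q_weight i * z i ^ k)%C) n) ^ 2 / qfact q k)%R.

Lemma sum_n_gram_Eq_term (k : nat) :
  sum_n (fun i => sum_n (fun j =>
    blaschke_q_weight i * Cconj (blaschke_q_weight j) * Eq_term q (z i * Cconj (z j)) k) n) n
  = RtoC (gram_term k).
Proof.
  pose proof (qfact_gt_0 q k (proj1 Hq)).
  unfold gram_term. rewrite RtoC_div by lra. rewrite <- sum_n_gram.
  set (w := fun i => blaschke_q_weight i * z i ^ k).
  transitivity (sum_n (fun i => sum_n (fun j => w i * Cconj (w j)) n * / qfact q k) n).
  - apply sum_n_ext; intro i. rewrite <- (sum_n_mult_r (K := C_Ring)). apply sum_n_ext; intro j.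
    unfold w, Eq_term. rewrite Cpow_mult_l, Cmult_conj, Cpow_conj.
    change mult with Cmult. match goal with |- ?l = ?r => change (@eq C l r) end.
    field. apply RtoC_neq_0; lra.
  - apply (sum_n_mult_r (K := C_Ring)).
Qed.

Lemma kernel_term_expansion (i j k : nat) : (i <= n)%nat -> (j <= n)%nat ->
  c i * Cconj (c j) * (1 - blaschke_q a q (z i) * Cconj (blaschke_q a q (z j)))
    * Eq_term q (z i * Cconj (z j)) k
  = RtoC (1 - Cmod a ^ 2) *
    (blaschke_q_weight i * Cconj (blaschke_q_weight j) * Eq_term q (z i * Cconj (z j)) k
     - RtoC (1 - q ^ S k) *
       (blaschke_q_weight i * Cconj (blaschke_q_weight j) * Eq_term q (z i * Cconj (z j)) (S k))).
Proof.
  intros Hi Hj.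
  pose proof (blaschke_q_denominator_neq_0 i Hi). pose proof (blaschke_q_denominator_neq_0 j Hj).
  unfold blaschke_q. rewrite blaschke_kernel by assumption.
  replace (RtoC (1 - q ^ S k) * _) with
    (blaschke_q_weight i * Cconj (blaschke_q_weight j) *
     (RtoC (1 - q ^ S k) * Eq_term q (z i * Cconj (z j)) (S k))) by ring.
  rewrite <- Eq_term_S by exact Hq.
  unfold blaschke_q_weight. rewrite Cdiv_conj by assumption.
  assert (Hs : RtoC (1 - q) = sqrt (1 - q) * sqrt (1 - q))
    by (rewrite <- RtoC_mult, sqrt_sqrt by lra; reflexivity).
  rewrite Hs, !Cmult_conj, Cconj_RtoC.
  field. split; [apply Cconj_neq_0 |]; assumption.
Qed.

Lemma gram_term_ge_0 (k : nat) : (0 <= gram_term k)%R.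
Proof.
  apply Rmult_le_pos; [apply pow2_ge_0 |].
  apply Rlt_le, Rinv_0_lt_compat, qfact_gt_0, Hq.
Qed.

Lemma is_series_gram_term :
  is_series (fun k => RtoC (gram_term k))
    (sum_n (fun i => sum_n (fun j =>
       blaschke_q_weight i * Cconj (blaschke_q_weight j) * Eq q (z i * Cconj (z j))) n) n).
Proof.
  apply (is_series_ext (fun k => sum_n (fun i => sum_n (fun j =>
    blaschke_q_weight i * Cconj (blaschke_q_weight j) * Eq_term q (z i * Cconj (z j)) k) n) n)).
  { intro k; apply sum_n_gram_Eq_term. }
  apply (is_series_sum_n (V := C_NormedModule)); intros i Hi.
  apply (is_series_sum_n (V := C_NormedModule)); intros j Hj.
  apply (is_series_scal (K := C_AbsRing) (V := C_NormedModule)), is_series_Eq;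
    [exact Hq | apply Cmod_point_product_lt; assumption].
Qed.

Lemma ex_series_gram_term : ex_series gram_term.
Proof. eexists; apply (is_series_Re _ _ is_series_gram_term). Qed.

Lemma is_series_kernel_sum :
  is_series (fun k => RtoC ((1 - Cmod a ^ 2) * (gram_term k - (1 - q ^ S k) * gram_term (S k)))%R)
    (sum_n (fun i => sum_n (fun j => c i * Cconj (c j) * kernel_bq a q (z i) (z j)) n) n).
Proof.
  apply (is_series_ext (fun k => sum_n (fun i => sum_n (fun j =>
    c i * Cconj (c j) * (1 - blaschke_q a q (z i) * Cconj (blaschke_q a q (z j)))
      * Eq_term q (z i * Cconj (z j)) k) n) n)).
  - intro k. match goal with |- ?l = ?r => change (@eq C l r) end. symmetry.
    rewrite (RtoC_mult (1 - Cmod a ^ 2)), (RtoC_minus (gram_term k)), (RtoC_mult (1 - q ^ S k)).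
    rewrite <- !sum_n_gram_Eq_term, <- sum_n_Cmult_minus.
    apply sum_n_ext_loc; intros i Hi. rewrite <- sum_n_Cmult_minus.
    apply sum_n_ext_loc; intros j Hj. symmetry; apply kernel_term_expansion; assumption.
  - apply (is_series_sum_n (V := C_NormedModule)); intros i Hi.
    apply (is_series_sum_n (V := C_NormedModule)); intros j Hj.
    unfold kernel_bq. rewrite Cmult_assoc.
    apply (is_series_scal (K := C_AbsRing) (V := C_NormedModule)), is_series_Eq;
      [exact Hq | apply Cmod_point_product_lt; assumption].
Qed.

End Kernel_expansion.

Close Scope C_scope.

Lemma is_series_qshift_ge_0 (q A : R) (U : nat -> R) (l : R) :
  0 <= q < 1 -> 0 <= A -> (forall k, 0 <= U k) -> ex_series U ->
  is_series (fun k => A * (U k - (1 - q ^ S k) * U (S k))) l -> 0 <= l.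
Proof.
  intros Hq HA HU HUs Hl.
  set (V := fun k => (1 - q ^ S k) * U (S k)).
  assert (HV : forall k, 0 <= V k <= U (S k)).
  { intro k. unfold V. pose proof (pow_lt_1_compat q (S k) Hq ltac:(lia)). pose proof (HU (S k)).
    split; nra. }
  assert (HUS : ex_series (fun k => U (S k)))
    by (apply (ex_series_incr_1 (K := R_AbsRing) (V := R_NormedModule) U), HUs).
  assert (HVs : ex_series V).
  { apply (ex_series_le (K := R_AbsRing) (V := R_CompleteNormedModule)) with (fun k => U (S k));
      [|exact HUS].
    intro k. change norm with Rabs. rewrite Rabs_pos_eq; apply HV. }
  rewrite <- (is_series_unique _ _ Hl), Series_scal_l, Series_minus, (Series_incr_1 U HUs)
    by assumption.
  pose proof (Series_le V (fun k => U (S k)) HV HUS). pose proof (HU 0%nat).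
  unfold V in *. apply Rmult_le_pos; lra.
Qed.

Theorem proposition8p1 (q : R) (a : C) :
  0 <= q < 1 -> Cmod a < 1 ->
  pos_def_kernel (fun z => Cmod z < 1 / sqrt (1 - q)) (kernel_bq a q).
Proof.
  intros Hq Ha n z c Hz s.
  pose proof (is_series_kernel_sum q a n z c Hq Ha Hz) as Hs.
  split.
  - exact (is_series_RtoC_Im _ _ Hs).
  - apply (is_series_qshift_ge_0 q (1 - Cmod a ^ 2) (gram_term q a n z c)).
    + exact Hq.
    + pose proof (Cmod_ge_0 a). nra.
    + apply gram_term_ge_0, Hq.
    + apply ex_series_gram_term; assumption.
    + exact (is_series_Re _ _ Hs).
Qed.
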